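(* The determinant of $\mathbf T$ satisfies $$\det(\mathbf T)=\pm\,\beta_{-b}^{\binom{a+b-1}{a-1}}\,\beta_a^{\binom{a+b-1}{a}}$$ for some sign $\pm$; moreover exactly one bijection $\pi$ of the set of $a$-subsets of $[-b,a-1]$ to itself satisfies $\mathbf T[I,\pi(I)]\neq0$ for all $I$ whenever $\beta_{-b}\beta_a\ne0$, namely $\pi(I)=(I\cup\{a\})\setminus\{-b\}-1$ if $-b\in I$ and $\pi(I)=I-1$ if $-b\notin I$.
   Context: Let $S$ be a finite set of integers with $a:=\max S\ge 1$ and $b:=-\min S\ge 1$. Each $s\in S$ carries a weight $\omega_s$ in a field $K$ of characteristic $0$; set $\omega_s:=0$ for $s\in\mathbb Z\setminus S$, and for $s\in\mathbb Z$ put $\beta_s:=\delta_{s,0}-\omega_s$. Notation: $[m,n]:=\{i\in\mathbb Z: m\le i\le n\}$, $X+c:=\{x+c:x\in X\}$ (and $X-c:=X+(-c)$); an $n$-subset is a subset of cardinality $n$. For a finite set $I\subseteq\mathbb Z$ and $s\in\mathbb Z$, $\epsilon_s(I):=(-1)^{\#\{i\in I:\ i<s\}}$. $\mathbf T$ is the square matrix with rows and columns indexed by the $a$-subsets of $[-b,a-1]$ and entries $\mathbf T[I,J]:=\epsilon_s(I)\beta_s$ if there is an integer $s$ with $I\cup\{a\}=(J+1)\cup\{s\}$ (such $s$ is then unique), and $\mathbf T[I,J]:=0$ otherwise. *)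

From HB Require Import structures.
From mathcomp Require Import all_boot all_order all_algebra all_fingroup.
From Stdlib Require Import ClassicalEpsilon.
Set Implicit Arguments. Unset Strict Implicit. Unset Printing Implicit Defensive.
Import Order.TTheory GRing.Theory Num.Theory.
Local Open Scope ring_scope.

Definition omega (K : fieldType) (S : seq int) (w : int -> K) (s : int) : K :=
  if s \in S then w s else 0.
Definition beta (K : fieldType) (S : seq int) (w : int -> K) (s : int) : K :=
  (s == 0)%:R - omega S w s.

(* a-subsets of [-b, a-1]: element i : 'I_(a+b) encodes the integer i - b. *)
Definition asub (a b : nat) := {A : {set 'I_(a + b)} | #|A| == a}.

Definition intmem (a b : nat) (I : asub a b) (x : int) : bool :=
  [exists i in val I, (i%:Z - b%:Z == x)].

Definition epsI (K : fieldType) (a b : nat) (s : int) (I : asub a b) : K :=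
  (-1) ^+ #|[set i in val I | (i%:Z - b%:Z < s)%R]|.

(* I \cup {a} = (J + 1) \cup {s}, as sets of integers *)
Definition Trel (a b : nat) (I J : asub a b) (s : int) : Prop :=
  forall x : int, (intmem I x || (x == a%:Z)) = (intmem J (x - 1) || (x == s)).

Definition Tentry (K : fieldType) (S : seq int) (w : int -> K) (a b : nat)
    (I J : asub a b) : K :=
  match excluded_middle_informative (exists s : int, Trel I J s) with
  | left H => let s := proj1_sig (constructive_indefinite_description _ H) in
              epsI K s I * beta S w s
  | right _ => 0
  end.

Definition Tmat (K : fieldType) (S : seq int) (w : int -> K) (a b : nat)
    : 'M[K]_#|{: asub a b}| :=
  \matrix_(i, j) Tentry S w (enum_val i) (enum_val j).

From HB Require Import structures.
From mathcomp Require Import all_boot all_order all_algebra all_fingroup.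
From mathcomp Require Import zify.
From Stdlib Require Import ClassicalEpsilon.
Import Order.TTheory GRing.Theory Num.Theory.
Set Implicit Arguments. Unset Strict Implicit. Unset Printing Implicit Defensive.
Local Open Scope ring_scope.

(* An a-subset I of [-b, a-1] is encoded by a set of positions in 'I_(a+b),
   position p standing for the integer p - b; the integer a is position a+b.
   A nonzero entry T[I, J] means I \cup {a} = (J + 1) \cup {s}: in positions,
   an "exchange" of I into J at some position t.  As both sides have a+1
   elements, summing positions gives  sum(I) + (a+b) = sum(J) + a + t, so
   for any bijection I |-> J along exchanges the positions add up to
   #{a-subsets} * b, independently of the bijection.  On the other hand
   t <= t0(I), where t0(I) = 0 if -b \in I (position 0 is never in J + 1)
   and a+b otherwise, and an explicit map pi0 exchanges every I at t0(I).
   Hence every bijection along nonzero entries is pi0; this is the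
   uniqueness statement, and in the Leibniz expansion of det T only pi0
   survives.  Its diagonal entries are signs times beta_{-b} or beta_a,
   counted by the same position identity for pi0. *)

Lemma det_single_perm (R : comPzRingType) (m : nat) (M : 'M[R]_m) (s0 : 'S_m) :
  (forall s : 'S_m, (forall i, M i (s i) != 0) -> s = s0) ->
  \det M = (-1) ^+ s0 * \prod_i M i (s0 i).
Proof.
move=> only_s0; rewrite /determinant (bigD1 s0) //= [X in _ + X]big1 ?addr0 //.
move=> s ne_s_s0.
have [/existsP[i /eqP Mi0]|/existsPn all_nz] := boolP [exists i, M i (s i) == 0].
  by rewrite (bigD1 i) //= Mi0 mul0r mulr0.
by case/eqP: ne_s_s0; apply: only_s0 => i; apply: all_nz.
Qed.

Lemma det_enum_single_perm (R : comPzRingType) (T : finType) (F : T -> T -> R)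
    (p0 : {perm T}) :
  (forall f : T -> T, injective f -> (forall x, F x (f x) != 0) -> f =1 p0) ->
  exists e : bool,
    \det (\matrix_(i, j) F (enum_val (A := T) i) (enum_val (A := T) j)) =
    (-1) ^+ e * \prod_x F x (p0 x).
Proof.
move=> only_p0.
pose g (i : 'I_#|T|) := enum_rank (p0 (enum_val (A := T) i)).
have g_inj : injective g.
  by move=> i j /enum_rank_inj /perm_inj /enum_val_inj.
exists (odd_perm (perm g_inj)); rewrite (det_single_perm (s0 := perm g_inj)).
  rewrite (big_enum_val (A := T)) /=; congr (_ * _); apply: eq_bigr => i _.
  by rewrite mxE permE enum_rankK.
move=> s nz_s; apply/permP => i; rewrite permE.
pose f x := enum_val (s (enum_rank x)).
have f_inj : injective f by move=> x y /enum_val_inj /perm_inj /enum_rank_inj.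
have nz_f x : F x (f x) != 0 by have := nz_s (enum_rank x); rewrite mxE enum_rankK.
by rewrite /g -(only_p0 f f_inj nz_f) /f !enum_valK.
Qed.

Section Positions.
Local Open Scope nat_scope.
Variable n : nat.
Implicit Types (X Y : {set 'I_n}) (p t : nat) (G : nat -> nat).

Definition nmem X p : bool := [exists i in X, nat_of_ord i == p].

Lemma nmem_ord X (i : 'I_n) : nmem X i = (i \in X).
Proof.
apply/existsP/idP => [[j /andP[Xj /eqP/val_inj <-]] // | Xi].
by exists i; rewrite Xi eqxx.
Qed.

Lemma nmem_lt X p : nmem X p -> p < n.
Proof. by case/existsP => j /andP[_ /eqP <-]. Qed.

Lemma nmem_set (P : pred nat) p :
  nmem [set i : 'I_n | P i] p = (p < n) && P p.
Proof.
apply/idP/andP => [X_p | [p_lt Pp]].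
  have p_lt := nmem_lt X_p.
  by move: X_p; rewrite -[p]/(Ordinal p_lt : nat) nmem_ord inE.
by rewrite -[p]/(Ordinal p_lt : nat) nmem_ord inE.
Qed.

Definition withTop X p : bool := nmem X p || (p == n).
Definition shift1 Y p : bool := (0 < p) && nmem Y p.-1.

Lemma withTop_ord X (i : 'I_n) : withTop X i = (i \in X).
Proof. by rewrite /withTop (ltn_eqF (ltn_ord i)) orbF nmem_ord. Qed.

Lemma shift1_ord Y (i : 'I_n) : shift1 Y i.+1 = (i \in Y).
Proof. by rewrite /shift1 /= nmem_ord. Qed.

Lemma withTop_le X p : withTop X p -> p <= n.
Proof. by case/orP => [/nmem_lt/ltnW | /eqP ->]. Qed.

Lemma sum_withTop X G :
  \sum_(p < n.+1) withTop X p * G p = \sum_(i in X) G i + G n.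
Proof.
rewrite big_ord_recr /= [in RHS]big_mkcond /= /withTop eqxx orbT mul1n.
congr (_ + _); apply: eq_bigr => i _.
by rewrite -/(withTop X i) withTop_ord; case: (i \in X); rewrite ?mul1n.
Qed.

Lemma sum_shift1 Y G :
  \sum_(p < n.+1) shift1 Y p * G p = \sum_(i in Y) G i.+1.
Proof.
rewrite big_ord_recl /= mul0n add0n [in RHS]big_mkcond /=.
apply: eq_bigr => i _; rewrite /bump leq0n add1n shift1_ord.
by case: (i \in Y); rewrite ?mul1n.
Qed.

Lemma sum_indicator m t G :
  \sum_(p < m) (nat_of_ord p == t) * G p = (t < m) * G t.
Proof.
elim: m => [|m IH]; first by rewrite big_ord0.
rewrite big_ord_recr /= IH ltnS.
by case: (ltngtP t m) => [||->]; rewrite /= ?mul0n ?addn0 ?add0n.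
Qed.

Definition exch X Y t : Prop := forall p, withTop X p = shift1 Y p || (p == t).

Lemma exch_le X Y t : exch X Y t -> t <= n.
Proof. by move=> XYt; apply: (@withTop_le X); rewrite XYt eqxx orbT. Qed.

Lemma exch_sum X Y t G : exch X Y t -> ~~ shift1 Y t ->
  \sum_(i in X) G i + G n = \sum_(i in Y) G i.+1 + G t.
Proof.
move=> XYt Y't; rewrite -sum_withTop -sum_shift1.
have -> : G t = (t < n.+1) * G t by rewrite ltnS (exch_le XYt) mul1n.
rewrite -sum_indicator -big_split /=.
apply: eq_bigr => p _; rewrite XYt -mulnDl; congr (_ * _).
by case: eqP => [->|]; rewrite ?(negbTE Y't) ?orbF ?addn0.
Qed.

Lemma exch_card X Y t : exch X Y t -> ~~ shift1 Y t -> #|X| = #|Y|.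
Proof.
by move=> XYt Y't; apply/eqP; rewrite -(eqn_add2r 1) -!sum1_card (exch_sum _ XYt Y't).
Qed.

Lemma exch_notin X Y t : exch X Y t -> #|X| = #|Y| -> ~~ shift1 Y t.
Proof.
move=> XYt eq_card; apply/negP => Y't.
have : \sum_(p < n.+1) withTop X p * 1 = \sum_(p < n.+1) shift1 Y p * 1.
  by apply: eq_bigr => p _; rewrite XYt; case: eqP => [->|]; rewrite ?Y't ?orbF.
rewrite (sum_withTop X (fun=> 1)) (sum_shift1 Y (fun=> 1)) !sum1_card eq_card; lia.
Qed.

Definition possum X : nat := \sum_(i in X) (i : nat).

Lemma exch_possum X Y t : exch X Y t -> ~~ shift1 Y t ->
  possum X + n = possum Y + #|Y| + t.
Proof.
move=> XYt Y't; rewrite /possum (exch_sum _ XYt Y't) -sum1_card -big_split /=.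
by under [in RHS]eq_bigr do rewrite addn1.
Qed.

Lemma exch_inj X Y Y' t : exch X Y t -> exch X Y' t ->
  ~~ shift1 Y t -> ~~ shift1 Y' t -> Y = Y'.
Proof.
move=> XYt XY't Y't Y''t; apply/setP => i; rewrite -!shift1_ord.
have := XYt i.+1; have := XY't i.+1.
case: (eqVneq i.+1 t) => [->|_]; first by rewrite (negbTE Y't) (negbTE Y''t).
by rewrite !orbF => -> ->.
Qed.

End Positions.

Section IntegerEncoding.
Variables a b : nat.
Implicit Types (I J : asub a b) (p t : nat) (x s : int).

Lemma intmem_pos I p : intmem I (p%:Z - b%:Z) = nmem (val I) p.
Proof.
by apply/existsP/existsP => -[i /andP[Ii /eqP E]]; exists i; rewrite Ii /=; apply/eqP; lia.
Qed.

Lemma intmem_below I x : x < - b%:Z -> intmem I x = false.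
Proof. by move=> x_lt; apply/existsP => -[i /andP[_ /eqP E]]; lia. Qed.

Lemma intmem_pred I p : intmem I (p%:Z - b%:Z - 1) = shift1 (val I) p.
Proof.
case: p => [|p]; first by rewrite intmem_below //; lia.
have -> : p.+1%:Z - b%:Z - 1 = p%:Z - b%:Z by lia.
by rewrite intmem_pos.
Qed.

Lemma eqZ_pos p q : (p%:Z - b%:Z == q%:Z - b%:Z) = (p == q)%N.
Proof. by apply/eqP/eqP; lia. Qed.

Lemma int_as_pos x : - b%:Z <= x -> x = (absz (x + b%:Z))%:Z - b%:Z.
Proof. lia. Qed.

Lemma top_as_pos : a%:Z = (a + b)%N%:Z - b%:Z.
Proof. lia. Qed.

Lemma Trel_exch I J s : Trel I J s ->
  exists2 t, s = t%:Z - b%:Z & exch (val I) (val J) t.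
Proof.
move=> IJs; have s_bound : - b%:Z <= s.
  have := IJs s; rewrite eqxx orbT => /orP[/existsP[i /andP[_ /eqP <-]] | /eqP ->]; lia.
move: (int_as_pos s_bound) IJs; move: (absz _) => t -> IJt.
exists t => // p; have := IJt (p%:Z - b%:Z).
by rewrite intmem_pos intmem_pred top_as_pos !eqZ_pos.
Qed.

Lemma exch_Trel I J t : exch (val I) (val J) t -> Trel I J (t%:Z - b%:Z).
Proof.
move=> IJt x; have [x_lt | x_ge] := ltrP x (- b%:Z).
  rewrite !intmem_below //=; last lia.
  have -> : (x == a%:Z) = false by apply/eqP; lia.
  by have -> : (x == t%:Z - b%:Z) = false by apply/eqP; lia.
rewrite (int_as_pos x_ge) intmem_pos intmem_pred top_as_pos !eqZ_pos; exact: IJt.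
Qed.

End IntegerEncoding.

Section ForcedExchange.
Local Open Scope nat_scope.
Variables a b : nat.
Implicit Types (I J : asub a b) (p t : nat).

Lemma card_val I : #|val I| = a.
Proof. exact/eqP/(valP I). Qed.

Lemma exch_asub_notin I J t : exch (val I) (val J) t -> ~~ shift1 (val J) t.
Proof. by move=> IJt; apply: (exch_notin IJt); rewrite !card_val. Qed.

Lemma exch_asub_possum I J t : exch (val I) (val J) t ->
  possum (val I) + (a + b) = possum (val J) + a + t.
Proof. by move=> IJt; rewrite (exch_possum IJt (exch_asub_notin IJt)) card_val. Qed.

Definition exch_pos I J : nat := possum (val I) + (a + b) - (possum (val J) + a).

Lemma exch_posE I J t : exch (val I) (val J) t -> t = exch_pos I J.
Proof. by move=> /exch_asub_possum; rewrite /exch_pos => ->; rewrite addKn. Qed.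

Lemma sum_exch_pos (f : asub a b -> asub a b) : injective f ->
  (forall I, exists t, exch (val I) (val (f I)) t) ->
  \sum_I exch_pos I (f I) = #|{: asub a b}| * b.
Proof.
move=> f_inj f_exch.
have weight I :
    possum (val I) + (a + b) = possum (val (f I)) + a + exch_pos I (f I).
  by have [t IJt] := f_exch I; rewrite -(exch_posE IJt); apply: exch_asub_possum.
have reindex :
    \sum_(I : asub a b) possum (val (f I)) = \sum_(I : asub a b) possum (val I).
  by rewrite [X in _ = X](reindex_inj f_inj).
have : \sum_(I : asub a b) (possum (val I) + (a + b)) =
        \sum_I (possum (val (f I)) + a + exch_pos I (f I)).
  by apply: eq_bigr => I _; apply: weight.
move: reindex; rewrite !big_split /= => ->.
by rewrite !sum_nat_const addnA => /addnI <-.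
Qed.

(* The forced position: 0 when -b is in I (position 0 is never in J + 1),
   and a + b (i.e. the integer a) otherwise. *)
Definition t0 I : nat := if nmem (val I) 0 then 0 else a + b.

Lemma exch_le_t0 I J t : exch (val I) (val J) t -> t <= t0 I.
Proof.
move=> IJt; rewrite /t0; case I0: (nmem (val I) 0); last exact: exch_le IJt.
by have := IJt 0; rewrite /withTop I0 => /esym/eqP <-.
Qed.

Definition succ_set I : {set 'I_(a + b)} :=
  [set q : 'I_(a + b) | withTop (val I) q.+1 && (q.+1 != t0 I)].

Lemma shift1_succ_set I p :
  shift1 (succ_set I) p = [&& 0 < p, withTop (val I) p & p != t0 I].
Proof.
case: p => [|q] //; rewrite /shift1 /succ_set /=.
rewrite (@nmem_set (a + b) (fun x => withTop (val I) x.+1 && (x.+1 != t0 I))).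
by case: (boolP (withTop (val I) q.+1)) => [/withTop_le ->|]; rewrite ?andbF.
Qed.

Lemma exch_succ_set I : exch (val I) (succ_set I) (t0 I).
Proof.
move=> p; rewrite shift1_succ_set; case: (eqVneq p (t0 I)) => [->|ne].
  rewrite orbT /t0 /withTop; case I0: (nmem (val I) 0); first by rewrite I0.
  by rewrite eqxx orbT.
rewrite orbF andbT; case: p ne => [|q] ne //=.
by move: ne; rewrite /withTop /t0; case: (nmem (val I) 0) => //= /negbTE.
Qed.

Lemma succ_set_notin I : ~~ shift1 (succ_set I) (t0 I).
Proof. by rewrite shift1_succ_set eqxx !andbF. Qed.

Lemma card_succ_set I : #|succ_set I| == a.
Proof. by rewrite -(exch_card (exch_succ_set I) (succ_set_notin I)) card_val. Qed.

Definition pi0 I : asub a b := exist _ (succ_set I) (card_succ_set I).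

Lemma exch_pi0 I : exch (val I) (val (pi0 I)) (t0 I).
Proof. exact: exch_succ_set. Qed.

(* pi0 is injective: t0 I can be read off pi0 I, and then I is recovered. *)
Lemma pi0_inj : 0 < a + b -> injective pi0.
Proof.
move=> n_gt0 I1 I2 /(congr1 val) /= eq_succ.
have t0_succ I : t0 I = if shift1 (succ_set I) (a + b) then 0 else a + b.
  rewrite shift1_succ_set n_gt0 /withTop eqxx orbT /= /t0.
  by case: nmem; rewrite ?eqxx // -lt0n n_gt0.
have eq_t0 : t0 I1 = t0 I2 by rewrite !t0_succ eq_succ.
apply/val_inj/setP => q; rewrite -!withTop_ord.
by rewrite (exch_succ_set I1) (exch_succ_set I2) eq_succ eq_t0.
Qed.

Lemma sum_t0 : 0 < a + b -> \sum_I t0 I = #|{: asub a b}| * b.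
Proof.
move=> n_gt0; rewrite -(sum_exch_pos (pi0_inj n_gt0)) => [|I].
  by apply: eq_bigr => I _; apply: exch_posE; apply: exch_pi0.
by exists (t0 I); apply: exch_pi0.
Qed.

(* Uniqueness: every bijection along exchanges is pi0.  Its positions are
   bounded by the forced ones, and both add up to the same total. *)
Lemma exch_unique (f : asub a b -> asub a b) : 0 < a + b -> injective f ->
  (forall I, exists t, exch (val I) (val (f I)) t) -> f =1 pi0.
Proof.
move=> n_gt0 f_inj f_exch.
have le_t0 I : exch_pos I (f I) <= t0 I.
  by have [t IJt] := f_exch I; rewrite -(exch_posE IJt); apply: exch_le_t0 IJt.
have eq_t0 I : exch_pos I (f I) = t0 I.
  have : \sum_I (t0 I - exch_pos I (f I)) == 0.
    by rewrite sumnB // sum_t0 // sum_exch_pos // subnn.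
  rewrite sum_nat_eq0 => /forallP/(_ I); rewrite subn_eq0 => ge_t0.
  by apply/eqP; rewrite eqn_leq le_t0.
move=> I; have [t IJt] := f_exch I; have := exch_posE IJt; rewrite eq_t0 => t_eq.
rewrite {}t_eq in IJt.
apply: val_inj.
exact: exch_inj IJt (exch_pi0 I) (exch_asub_notin IJt) (exch_asub_notin (exch_pi0 I)).
Qed.

Lemma card_asub : #|{: asub a b}| = 'C(a + b, a).
Proof.
rewrite card_sig -[in RHS](card_ord (a + b)) -card_draws.
by apply: eq_card => A; rewrite !inE.
Qed.

Lemma sum_t0_count :
  \sum_I t0 I = #|[pred I : asub a b | ~~ nmem (val I) 0]| * (a + b).
Proof.
rewrite (bigID (fun I : asub a b => nmem (val I) 0)) /= big1 => [|I I0].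
  rewrite add0n -sum_nat_const; apply: eq_big => [I | I /negbTE I0]; first by rewrite !inE.
  by rewrite /t0 I0.
by rewrite /t0 I0.
Qed.

Lemma card_without_min : 0 < a + b ->
  #|[pred I : asub a b | ~~ nmem (val I) 0]| = 'C(a + b - 1, a).
Proof.
move=> n_gt0; apply/eqP; rewrite -(eqn_pmul2r n_gt0) -sum_t0_count sum_t0 //.
by rewrite card_asub subn1 [_ * (a + b)]mulnC mul_bin_down addKn mulnC.
Qed.

Lemma card_with_min : 0 < a ->
  #|[pred I : asub a b | nmem (val I) 0]| = 'C(a + b - 1, a - 1).
Proof.
move=> a_gt0.
have pascal : 'C(a + b, a) = 'C(a + b - 1, a) + 'C(a + b - 1, a - 1).
  by case: (a) a_gt0 => // a' _; rewrite addSn !subn1 /= binS.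
have := cardC [pred I : asub a b | nmem (val I) 0]; rewrite card_asub pascal.
rewrite [#|[predC _]|](eq_card (B := [pred I : asub a b | ~~ nmem (val I) 0])) => [|I].
  by rewrite card_without_min ?addn_gt0 ?a_gt0 // addnC => /addnI.
by rewrite !inE.
Qed.

End ForcedExchange.

Section TransferEntries.
Variables (K : fieldType) (S : seq int) (w : int -> K) (a b : nat).
Implicit Types (I J : asub a b) (s x : int).

Lemma Trel_unique I J s s' : Trel I J s -> Trel I J s' -> s = s'.
Proof.
move=> /Trel_exch[t -> IJt] /Trel_exch[t' -> IJt'].
by rewrite (exch_posE IJt) (exch_posE IJt').
Qed.

Lemma TentryE I J s : Trel I J s -> Tentry S w I J = epsI K s I * beta S w s.
Proof.
move=> IJs; rewrite /Tentry.
case: excluded_middle_informative => [ex | []]; last by exists s.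
by case: constructive_indefinite_description => s' /= /(Trel_unique IJs) <-.
Qed.

Lemma Tentry_neq0 I J : Tentry S w I J != 0 -> exists s, Trel I J s.
Proof. by rewrite /Tentry; case: excluded_middle_informative => // _; rewrite eqxx. Qed.

Lemma intmem_min I : intmem I (- b%:Z) = nmem (val I) 0.
Proof. by rewrite -intmem_pos sub0r. Qed.

Definition forced I : int := if nmem (val I) 0 then - b%:Z else a%:Z.

Lemma Tentry_pi0 I :
  Tentry S w I (pi0 I) = epsI K (forced I) I * beta S w (forced I).
Proof.
apply: TentryE; have := exch_Trel (exch_pi0 I).
by rewrite /forced /t0; case: nmem; rewrite ?sub0r // -top_as_pos.
Qed.

Lemma Tentry_pi0_neq0 I :
  beta S w (- b%:Z) * beta S w a%:Z != 0 -> Tentry S w I (pi0 I) != 0.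
Proof.
rewrite mulf_eq0 negb_or => /andP[nz_min nz_max].
by rewrite Tentry_pi0 mulf_eq0 negb_or signr_eq0 /forced; case: nmem.
Qed.

Lemma prod_Tentry_pi0 : (0 < a)%N ->
  exists e : bool, \prod_(I : asub a b) Tentry S w I (pi0 I) =
    (-1) ^+ e * beta S w (- b%:Z) ^+ 'C(a + b - 1, a - 1)
              * beta S w a%:Z ^+ 'C(a + b - 1, a).
Proof.
move=> a_gt0; under eq_bigr do rewrite Tentry_pi0.
rewrite big_split /= /epsI prodrXr.
eexists; rewrite -[X in X * _ = _]signr_odd -mulrA; congr (_ * _).
rewrite (bigID (fun I => nmem (val I) 0)) /= -card_with_min //.
rewrite -card_without_min ?addn_gt0 ?a_gt0 //.
rewrite -!prodr_const; congr (_ * _); apply: eq_big => I; rewrite ?inE //.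
- by rewrite /forced => ->.
- by rewrite /forced => /negbTE ->.
Qed.

Lemma pi0_intmem I x :
  intmem (pi0 I) (x - 1) =
  (if intmem I (- b%:Z) then (intmem I x || (x == a%:Z)) && (x != - b%:Z)
   else intmem I x).
Proof.
rewrite intmem_min; have [x_lt | x_ge] := ltrP x (- b%:Z).
  rewrite !intmem_below //; last lia.
  have -> : (x == a%:Z) = false by apply/eqP; lia.
  by case: nmem.
rewrite (int_as_pos x_ge); move: (absz _) => p.
have -> : (p%:Z - b%:Z == - b%:Z) = (p == 0)%N by apply/eqP/eqP; lia.
rewrite intmem_pred intmem_pos (top_as_pos a b) eqZ_pos /= shift1_succ_set /withTop /t0.
case I0: (nmem (val I) 0) => /=; first by case: p => [|q] //=; rewrite andbF.
case: p => [|q] /=; first by rewrite I0.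
case: eqP => [q_max | _] /=; last by rewrite orbF andbT.
by rewrite andbF; apply/esym/negbTE/negP => /nmem_lt; rewrite q_max ltnn.
Qed.

End TransferEntries.

Theorem mainTheorem6 (K : fieldType) (S : seq int) (w : int -> K) (a b : nat) :
  [pchar K] =i pred0 ->
  (1 <= a)%N -> (1 <= b)%N ->
  a%:Z \in S -> - b%:Z \in S ->
  (forall s, s \in S -> - b%:Z <= s <= a%:Z) ->
  (exists e : bool,
     \det (Tmat S w a b) =
       (-1) ^+ e * beta S w (- b%:Z) ^+ 'C(a + b - 1, a - 1)
                 * beta S w a%:Z ^+ 'C(a + b - 1, a))
  /\
  (beta S w (- b%:Z) * beta S w a%:Z != 0 ->
     (exists pi : {perm (asub a b)}, forall I, Tentry S w I (pi I) != 0)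
     /\
     (forall pi : {perm (asub a b)}, (forall I, Tentry S w I (pi I) != 0) ->
        forall (I : asub a b) (x : int),
          intmem (pi I) x =
            (if intmem I (- b%:Z)
             then (intmem I (x + 1) || (x + 1 == a%:Z)) && (x + 1 != - b%:Z)
             else intmem I (x + 1)))).
Proof.
move=> _ a_gt0 _ _ _ _; have n_gt0 : (0 < a + b)%N by rewrite addn_gt0 a_gt0.
pose p0 : {perm asub a b} := perm (pi0_inj n_gt0).
have only_p0 (f : asub a b -> asub a b) :
    injective f -> (forall I, Tentry S w I (f I) != 0) -> f =1 p0.
  move=> f_inj nz_f I; rewrite permE; apply: exch_unique => // J.
  by have [s /Trel_exch[t _ exch_t]] := Tentry_neq0 (nz_f J); exists t.
split.
  have [e1 ->] := det_enum_single_perm only_p0.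
  have [e2 diag] := prod_Tentry_pi0 S w b a_gt0.
  exists (e1 (+) e2); under eq_bigr do rewrite permE.
  by rewrite diag signr_addb !mulrA.
move=> nz_beta; split; first by exists p0 => I; rewrite permE Tentry_pi0_neq0.
move=> pi nz_pi I x.
by rewrite (only_p0 pi (@perm_inj _ pi) nz_pi) permE -[in LHS](addrK 1 x) pi0_intmem.
Qed.
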